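(* Let $G$ be a simple connected bipartite graph on $n\ge 3$ vertices with maximum degree $\Delta\le n-2$, and let $S=\sum_{j=1}^{n}D_j$. Suppose $\deg(v_1)=\cdots=\deg(v_k)=\Delta$, and for $1\le i\le k$ let $a_i=(\Delta+1)(S-2D_i-2t_{v_i}\Delta)+2n\Delta^{2}$ and $b_i=D_i^{2}-2S\Delta^{2}+2D_it_{v_i}\Delta+t_{v_i}^{2}\Delta^{2}$. Then (i) $\displaystyle \rho^{\mathcal{D}}(G)\ge \max_{1\le i\le k}\frac{a_i+\sqrt{a_i^{2}+4b_i(1+\Delta)(n-\Delta-1)}}{2(1+\Delta)(n-\Delta-1)}$; (ii) $\displaystyle \rho^{\mathcal{D}}_{min}(G)\le \min_{1\le i\le k}\frac{a_i-\sqrt{a_i^{2}+4b_i(1+\Delta)(n-\Delta-1)}}{2(1+\Delta)(n-\Delta-1)}$.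
   Context: $G$ has vertex set $\{v_1,\dots,v_n\}$; $d_G(u,v)$ denotes the distance in $G$. The distance matrix is $\mathcal{D}(G)=(d_G(v_i,v_j))$. The transmission of $v_i$ is $D_i=\sum_{j\ne i}d_G(v_i,v_j)$. For a vertex $v$ of degree $d_v$, $t_v=\frac{1}{d_v}\sum_{v_j\sim v}D_j$. $\rho^{\mathcal{D}}(G)$ and $\rho^{\mathcal{D}}_{min}(G)$ are the largest and least eigenvalues of $\mathcal{D}(G)$. *)

From HB Require Import structures.
From mathcomp Require Import all_boot all_order all_algebra.
From mathcomp Require Import reals.
Set Implicit Arguments. Unset Strict Implicit. Unset Printing Implicit Defensive.
Import Order.TTheory GRing.Theory Num.Theory.
Local Open Scope ring_scope.

(* Graphs: a relation e on 'I_n (vertices v_1..v_n are the ordinals 0..n-1). *)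
Definition simple_graph (n : nat) (e : rel 'I_n) : Prop :=
  symmetric e /\ irreflexive e.

Definition connected_graph (n : nat) (e : rel 'I_n) : Prop :=
  forall x y : 'I_n, connect e x y.

Definition bipartite (n : nat) (e : rel 'I_n) : Prop :=
  exists c : 'I_n -> bool, forall x y, e x y -> c x != c y.

Definition deg (n : nat) (e : rel 'I_n) (x : 'I_n) : nat := #|[set y | e x y]|.

Definition maxdeg (n : nat) (e : rel 'I_n) : nat := (\max_(x : 'I_n) deg e x)%N.

Fixpoint walkn (n : nat) (e : rel 'I_n) (k : nat) (x y : 'I_n) : bool :=
  if k is k'.+1 then [exists z, e x z && walkn e k' z y] else x == y.

(* graph distance: least length of a walk from x to y (= #|I_n| if none) *)
Definition dist (n : nat) (e : rel 'I_n) (x y : 'I_n) : nat :=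
  find (fun k => walkn e k x y) (iota 0 n).

Definition distmx (R : realType) (n : nat) (e : rel 'I_n) : 'M[R]_n :=
  \matrix_(i, j) (dist e i j)%:R.

Definition trans (R : realType) (n : nat) (e : rel 'I_n) (i : 'I_n) : R :=
  \sum_(j < n | j != i) (dist e i j)%:R.

Definition tv (R : realType) (n : nat) (e : rel 'I_n) (v : 'I_n) : R :=
  (deg e v)%:R^-1 * \sum_(j < n | e v j) trans R e j.

Definition is_largest_eig (R : realType) (n : nat) (A : 'M[R]_n) (r : R) : Prop :=
  eigenvalue A r /\ forall x, eigenvalue A x -> x <= r.

Definition is_least_eig (R : realType) (n : nat) (A : 'M[R]_n) (r : R) : Prop :=
  eigenvalue A r /\ forall x, eigenvalue A x -> r <= x.

From HB Require Import structures.
From mathcomp Require Import all_boot all_order all_algebra.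
From mathcomp Require Import reals.
From mathcomp Require Import complex ring lra zify.
Set Implicit Arguments. Unset Strict Implicit. Unset Printing Implicit Defensive.
Import Order.TTheory GRing.Theory Num.Theory.
Local Open Scope ring_scope.

(* Test the Rayleigh quotients of the distance matrix D on the vectors x that
   take a value al on the closed neighbourhood N[v] of a vertex v of degree
   Delta and a value be elsewhere.  Bipartite graphs have no triangles, so two
   distinct neighbours of v are at distance 2, and the quadratic forms reduce to
     x^T D x = 2 Delta^2 al^2 + 2 (T - 2 Delta^2) al be + (S - 2 T + 2 Delta^2) be^2,
     x^T x   = (1 + Delta) al^2 + (n - Delta - 1) be^2,
   with T = D_v + Delta t_v the total transmission of N[v].  Since
   rho_min x^T x <= x^T D x <= rho x^T x for all al, be, the extreme eigenvalues
   of D are separated by the two generalized eigenvalues of this 2x2 pencil,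
   which are the two roots in the statement. *)

(* MathComp's spectral theorem is stated over a numClosedFieldType, hence the
   detour through the complexification of A. *)
Section RealSymmetricSpectral.
Local Open Scope sesquilinear_scope.
Variables (R : rcfType) (n : nat) (A : 'M[R]_n).
Hypothesis symA : A^T = A.

Local Notation toC := (real_complex R).
Let Ac := map_mx toC A.
Let P := spectralmx Ac.
Let d := spectral_diag Ac.

Let toC_real (a : R) : toC a \is Num.real.
Proof. by apply/complex_realP; exists a. Qed.

Let Ac_hermitian : Ac \is hermsymmx.
Proof.
apply: realsym_hermsym.
  apply/is_hermitianmxP; rewrite expr0 scale1r.
  by apply/matrixP => i j; rewrite !mxE -[in LHS]symA mxE.
by apply/mxOverP => i j; rewrite mxE.
Qed.

Let Ac_spectral : Ac = P^t* *m diag_mx d *m P.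
Proof.
have /orthomx_spectralP := hermitian_normalmx Ac_hermitian.
by rewrite invmx_unitary // spectral_unitarymx.
Qed.

Let P_unitary : P *m P^t* = 1%:M.
Proof. exact/unitarymxP/spectral_unitarymx. Qed.

Let d_real j : toC (complex.Re (d 0 j)) = d 0 j.
Proof.
by rewrite RRe_real //; apply: (mxOverP (hermitian_spectral_diag_real Ac_hermitian)).
Qed.

Let eigenvalue_spectral_diag j : eigenvalue A (complex.Re (d 0 j)).
Proof.
rewrite eigenvalue_root_char -(fmorph_root toC) map_char_poly.
rewrite [X in root _ X](_ : _ = d 0 j); last exact: d_real.
rewrite -eigenvalue_root_char; apply/eigenvalueP; exists (row j P).
  rewrite -row_mul [X in P *m X]Ac_spectral !mulmxA P_unitary mul1mx.
  by apply/rowP => k; rewrite mul_diag_mx !mxE.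
apply/eqP => /rowP rowj0.
move/matrixP: P_unitary => /(_ j j); rewrite !mxE eqxx big1 => [/esym/eqP|k _].
  by rewrite oner_eq0.
by have := rowj0 k; rewrite !mxE => ->; rewrite mul0r.
Qed.

Lemma symmx_form_eigen_combination (x : 'rV[R]_n) :
  exists r w : 'I_n -> R, [/\ forall j, eigenvalue A (r j), forall j, 0 <= w j,
    (x *m x^T) 0 0 = \sum_j w j & (x *m A *m x^T) 0 0 = \sum_j r j * w j].
Proof.
pose xc := map_mx toC x; pose y := xc *m P^t*.
have xcT : xc^t* = map_mx toC x^T.
  by apply/matrixP => i j; rewrite !mxE conj_Creal.
have yT : y^t* = P *m xc^t*.
  apply/matrixP => i j; rewrite !mxE rmorph_sum; apply: eq_bigr => k _.
  by rewrite !mxE rmorphM /= conjCK mulrC.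
have PtP : P^t* *m P = 1%:M.
  by rewrite -invmx_unitary ?spectral_unitarymx ?mulVmx ?spectral_unit.
pose w j := complex.Re (y 0 j * (y 0 j)^*).
have w_real j : toC (w j) = y 0 j * (y 0 j)^*.
  by rewrite /w RRe_real // -normCK realX // normr_real.
exists (fun j => complex.Re (d 0 j)), w; split.
- exact: eigenvalue_spectral_diag.
- by move=> j; rewrite -ler0c w_real mul_conjC_ge0.
- apply: (@complexI R); rewrite rmorph_sum /=.
  under eq_bigr do rewrite w_real.
  have -> : toC ((x *m x^T) 0 0) = (xc *m xc^t*) 0 0.
    by rewrite xcT /xc -map_mxM [RHS]mxE.
  rewrite (_ : xc *m xc^t* = y *m y^t*); last first.
    by rewrite yT mulmxA -(mulmxA xc) PtP mulmx1.
  by rewrite mxE; apply: eq_bigr => k _; rewrite !mxE.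
- apply: (@complexI R); rewrite rmorph_sum /=.
  under eq_bigr do rewrite rmorphM /= w_real d_real.
  have -> : toC ((x *m A *m x^T) 0 0) = (xc *m Ac *m xc^t*) 0 0.
    by rewrite xcT /xc /Ac -!map_mxM [RHS]mxE.
  rewrite (_ : xc *m Ac *m xc^t* = y *m diag_mx d *m y^t*); last first.
    by rewrite yT Ac_spectral !mulmxA.
  rewrite mxE; apply: eq_bigr => k _; rewrite mul_mx_diag !mxE.
  by rewrite mulrCA mulrA.
Qed.

Lemma symmx_form_le_max_eig rho :
  (forall z, eigenvalue A z -> z <= rho) ->
  forall x : 'rV[R]_n, (x *m A *m x^T) 0 0 <= rho * (x *m x^T) 0 0.
Proof.
move=> le_rho x; have [r [w [eig_r w_ge0 -> ->]]] := symmx_form_eigen_combination x.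
by rewrite mulr_sumr; apply: ler_sum => j _; rewrite ler_wpM2r ?le_rho.
Qed.

Lemma min_eig_le_symmx_form rho :
  (forall z, eigenvalue A z -> rho <= z) ->
  forall x : 'rV[R]_n, rho * (x *m x^T) 0 0 <= (x *m A *m x^T) 0 0.
Proof.
move=> ge_rho x; have [r [w [eig_r w_ge0 -> ->]]] := symmx_form_eigen_combination x.
by rewrite mulr_sumr; apply: ler_sum => j _; rewrite ler_wpM2r ?ge_rho.
Qed.

End RealSymmetricSpectral.

Lemma binary_form_psd (R : realDomainType) (G C H : R) :
  (forall al be : R, 0 <= G * al ^+ 2 - 2 * C * al * be + H * be ^+ 2) ->
  [/\ 0 <= G, 0 <= H & C ^+ 2 <= G * H].
Proof.
move=> psd; rewrite !expr2 in psd *.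
have G_ge0 : 0 <= G by have := psd 1 0; nra.
have H_ge0 : 0 <= H by have := psd 0 1; nra.
split => //; have [G0 | G_gt0] := eqVneq G 0.
  by have := psd (H + 1) C; rewrite G0; nra.
by have := psd C G; nra.
Qed.

Lemma rayleigh2_max_root_le (R : rcfType) (P C E u m rho : R) :
  0 < u -> 0 < m ->
  (forall al be : R, P * al ^+ 2 + 2 * C * al * be + E * be ^+ 2
                     <= rho * (u * al ^+ 2 + m * be ^+ 2)) ->
  (P * m + E * u + Num.sqrt ((P * m + E * u) ^+ 2 + 4 * (C ^+ 2 - P * E) * u * m))
    / (2 * u * m) <= rho.
Proof.
move=> u_gt0 m_gt0 le_rho.
have [G_ge0 H_ge0 det_ge0] : [/\ 0 <= rho * u - P, 0 <= rho * m - E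
                                & C ^+ 2 <= (rho * u - P) * (rho * m - E)].
  apply: binary_form_psd => al be.
  have -> : (rho * u - P) * al ^+ 2 - 2 * C * al * be + (rho * m - E) * be ^+ 2
          = rho * (u * al ^+ 2 + m * be ^+ 2)
            - (P * al ^+ 2 + 2 * C * al * be + E * be ^+ 2).
    by ring.
  by rewrite subr_ge0.
rewrite ler_pdivrMr ?mulr_gt0 //.
suff : Num.sqrt ((P * m + E * u) ^+ 2 + 4 * (C ^+ 2 - P * E) * u * m)
         <= m * (rho * u - P) + u * (rho * m - E) by lra.
have bound_ge0 : 0 <= m * (rho * u - P) + u * (rho * m - E).
  by rewrite addr_ge0 // mulr_ge0 // ltW.
rewrite -(ger0_norm bound_ge0) -sqrtr_sqr.
(* With G := rho u - P, H := rho m - E and T := m G + u H, the radicand is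
   T^2 - 4 u m (G H - C^2). *)
apply: ler_wsqrtr; rewrite -subr_ge0 in det_ge0.
have := mulr_ge0 det_ge0 (ltW (mulr_gt0 u_gt0 m_gt0)); rewrite !expr2; nra.
Qed.

Lemma rayleigh2_min_root_ge (R : rcfType) (P C E u m rho : R) :
  0 < u -> 0 < m ->
  (forall al be : R, rho * (u * al ^+ 2 + m * be ^+ 2)
                     <= P * al ^+ 2 + 2 * C * al * be + E * be ^+ 2) ->
  rho <= (P * m + E * u - Num.sqrt ((P * m + E * u) ^+ 2 + 4 * (C ^+ 2 - P * E) * u * m))
           / (2 * u * m).
Proof.
move=> u_gt0 m_gt0 ge_rho.
have le_opp : forall al be : R, - P * al ^+ 2 + 2 * - C * al * be + - E * be ^+ 2
                                <= - rho * (u * al ^+ 2 + m * be ^+ 2).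
  move=> al be; rewrite [leRHS]mulNr.
  have -> : - P * al ^+ 2 + 2 * - C * al * be + - E * be ^+ 2
          = - (P * al ^+ 2 + 2 * C * al * be + E * be ^+ 2) by ring.
  by rewrite lerN2.
have := rayleigh2_max_root_le u_gt0 m_gt0 le_opp.
have -> : (- C) ^+ 2 - - P * - E = C ^+ 2 - P * E by ring.
have -> : (- P * m + - E * u) ^+ 2 = (P * m + E * u) ^+ 2 by ring.
by rewrite lerNr -mulNr !opprD !mulNr !opprK.
Qed.

Section Distance.
Variables (n : nat) (e : rel 'I_n).

Lemma walkn1 x y : walkn e 1 x y = e x y.
Proof.
apply/existsP/idP => [[z /andP[exz /eqP <-]] // | exy].
by exists y; rewrite exy eqxx.
Qed.

Lemma walknSr k x y : walkn e k.+1 x y = [exists z, walkn e k x z && e z y].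
Proof.
elim: k x y => [|k IHk] x y.
  apply/existsP/existsP => [[z /andP[exz /eqP <-]] | [z /andP[/eqP <- exy]]].
    by exists x; rewrite /= eqxx.
  by exists y; rewrite /= exy eqxx.
have -> : walkn e k.+2 x y = [exists z, e x z && walkn e k.+1 z y] by [].
apply/existsP/existsP => [[z /andP[exz]] | [z /andP[]]].
  rewrite IHk => /existsP[z' /andP[wzz' ez'y]].
  by exists z'; rewrite ez'y andbT; apply/existsP; exists z; rewrite exz.
move=> /existsP[z' /andP[exz' wz'z]] ezy.
by exists z'; rewrite exz' IHk; apply/existsP; exists z; rewrite ezy andbT.
Qed.

Hypothesis e_sym : symmetric e.

Lemma walkn_sym k x y : walkn e k x y = walkn e k y x.
Proof.
elim: k x y => [|k IHk] x y; first by rewrite /= eq_sym.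
rewrite walknSr /=; apply/existsP/existsP => [] [z /andP[wxz ezy]].
  by exists z; rewrite e_sym ezy -IHk wxz.
by exists z; rewrite IHk ezy e_sym wxz.
Qed.

Lemma distC x y : dist e x y = dist e y x.
Proof. by apply: eq_find => k; apply: walkn_sym. Qed.

End Distance.

Lemma dist_eq_least_walk n (e : rel 'I_n) (x y : 'I_n) k : (k <= n)%N ->
  walkn e k x y -> (forall l, (l < k)%N -> ~~ walkn e l x y) -> dist e x y = k.
Proof.
move=> le_kn walk_k no_shorter; rewrite /dist -[X in iota 0 X](subnKC le_kn) iotaD add0n.
rewrite find_cat size_iota ifF; last first.
  by apply/negbTE/hasPn => l; rewrite mem_iota add0n => /andP[_ /no_shorter].
by case: (n - k)%N => [|m] /=; rewrite ?walk_k addn0.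
Qed.

Lemma distxx n (e : rel 'I_n) x : dist e x x = 0%N.
Proof. by apply: dist_eq_least_walk => //=. Qed.

Lemma dist_edge n (e : rel 'I_n) x y : irreflexive e -> (1 < n)%N -> e x y ->
  dist e x y = 1%N.
Proof.
move=> e_irr lt1n exy; apply: dist_eq_least_walk => [|| [] // _].
- exact: ltnW.
- by rewrite walkn1.
- by apply: contraTneq exy => ->; rewrite e_irr.
Qed.

Lemma bipartite_dist_common_neighbour n (e : rel 'I_n) v x y :
  symmetric e -> bipartite e -> (2 < n)%N ->
  e v x -> e v y -> x != y -> dist e x y = 2%N.
Proof.
move=> e_sym [c c_proper] lt2n evx evy neq_xy.
apply: dist_eq_least_walk => [||[|[|]] // _].
- exact: ltnW.
- apply/existsP; exists v; rewrite e_sym evx.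
  by apply/existsP; exists y; rewrite evy eqxx.
rewrite walkn1; apply/negP => exy.
move: (c_proper _ _ evx) (c_proper _ _ evy) (c_proper _ _ exy).
by case: (c v) (c x) (c y) => [] [] [].
Qed.

Lemma sum_indicatorM (R : pzSemiRingType) (I : finType) (B : {pred I}) (F : I -> R) :
  \sum_i (i \in B)%:R * F i = \sum_(i in B) F i.
Proof.
by rewrite [RHS]big_mkcond; apply: eq_bigr => i _; case: (i \in B); rewrite ?mul1r ?mul0r.
Qed.

Section TwoLevelVector.
Variables (R : comPzRingType) (n : nat) (B : {set 'I_n}) (al be : R).

Definition two_level_vec : 'rV[R]_n := \row_j (if j \in B then al else be).

Lemma two_level_form (A : 'M[R]_n) : A^T = A ->
  (two_level_vec *m A *m two_level_vec^T) 0 0 =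
    be ^+ 2 * \sum_i \sum_j A i j
  + 2 * be * (al - be) * \sum_(i in B) \sum_j A i j
  + (al - be) ^+ 2 * \sum_(i in B) \sum_(j in B) A i j.
Proof.
move=> symA; set g := al - be; set c := fun i : 'I_n => (i \in B)%:R : R.
have -> : (two_level_vec *m A *m two_level_vec^T) 0 0 =
    \sum_i \sum_j (be ^+ 2 * A i j + be * g * (c i * A i j)
                   + be * g * (c j * A i j) + g ^+ 2 * (c i * (c j * A i j))).
  rewrite mxE exchange_big; apply: eq_bigr => i _.
  rewrite mxE big_distrl; apply: eq_bigr => j _.
  by rewrite !mxE /c /g; case: (i \in B); case: (j \in B) => /=; ring.
under eq_bigr do rewrite !big_split /= -!mulr_sumr.
rewrite !big_split /= -!mulr_sumr.
have -> : \sum_i \sum_j c j * A i j = \sum_i c i * \sum_j A i j.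
  rewrite exchange_big; apply: eq_bigr => i _; rewrite mulr_sumr.
  by apply: eq_bigr => j _; rewrite -[in LHS]symA mxE.
rewrite !sum_indicatorM; under [X in g ^+ 2 * X]eq_bigr do rewrite sum_indicatorM.
ring.
Qed.

Lemma two_level_norm :
  (two_level_vec *m two_level_vec^T) 0 0 = al ^+ 2 * #|B|%:R + be ^+ 2 * #|~: B|%:R.
Proof.
rewrite mxE (bigID (mem B)) /=.
have -> : \sum_(j in B) two_level_vec 0 j * two_level_vec^T j 0 = \sum_(j in B) al ^+ 2.
  by apply: eq_bigr => j jB; rewrite !mxE jB.
have -> : \sum_(j | j \notin B) two_level_vec 0 j * two_level_vec^T j 0
          = \sum_(j in ~: B) be ^+ 2.
  by apply: eq_big => [j | j jB]; rewrite ?inE // !mxE (negbTE jB).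
by rewrite !sumr_const !mulr_natr.
Qed.

End TwoLevelVector.

Lemma transE (R : realType) n (e : rel 'I_n) i :
  trans R e i = \sum_j (dist e i j)%:R.
Proof. by rewrite [RHS](bigD1 i) //= distxx add0r. Qed.

Lemma deg_mul_tv (R : realType) n (e : rel 'I_n) v :
  (deg e v)%:R * tv R e v = \sum_(j | e v j) trans R e j.
Proof.
have [deg0 | deg_gt0] := posnP (deg e v).
  rewrite deg0 mul0r big_pred0 // => j; apply/negP => evj.
  by move/eqP: deg0; rewrite cards_eq0 => /eqP/setP/(_ j); rewrite !inE evj.
by rewrite mulrA mulfV ?mul1r ?pnatr_eq0 -?lt0n.
Qed.

Lemma distmx_sym (R : realType) n (e : rel 'I_n) :
  symmetric e -> (distmx R e)^T = distmx R e.
Proof. by move=> e_sym; apply/matrixP => i j; rewrite !mxE distC. Qed.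

Definition closed_nbhd n (e : rel 'I_n) (v : 'I_n) : {set 'I_n} := v |: [set y | e v y].

Section ClosedNeighbourhood.
Variables (R : realType) (n : nat) (e : rel 'I_n) (v : 'I_n).
Hypotheses (e_sym : symmetric e) (e_irr : irreflexive e).

Local Notation N := [set y | e v y].
Local Notation Dl := ((deg e v)%:R : R).
Local Notation d i j := ((dist e i j)%:R : R).

Let v_notin_N : v \notin N.
Proof. by rewrite inE e_irr. Qed.

Lemma card_closed_nbhd : #|closed_nbhd e v| = (deg e v).+1.
Proof. by rewrite cardsU1 v_notin_N. Qed.

Lemma sum_trans_closed_nbhd :
  \sum_(i in closed_nbhd e v) trans R e i = trans R e v + Dl * tv R e v.
Proof.
by rewrite big_setU1 //= deg_mul_tv; congr (_ + _); apply: eq_bigl => j; rewrite inE.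
Qed.

Lemma norm_closed_nbhd_vec (al be : R) :
  let x := two_level_vec (closed_nbhd e v) al be in
  (x *m x^T) 0 0 = (1 + Dl) * al ^+ 2 + (n%:R - Dl - 1) * be ^+ 2.
Proof.
move=> x; rewrite /x two_level_norm card_closed_nbhd.
have := cardsC (closed_nbhd e v); rewrite card_closed_nbhd card_ord.
by move/(congr1 (GRing.natmul (1 : R))); rewrite natrD -addn1 natrD => <-; ring.
Qed.

Hypotheses (e_bip : bipartite e) (lt2n : (2 < n)%N).

Lemma sum_dist_closed_nbhd :
  \sum_(i in closed_nbhd e v) \sum_(j in closed_nbhd e v) d i j = 2 * Dl ^+ 2.
Proof.
have lt1n : (1 < n)%N by apply: ltnW.
have dist_vN : \sum_(j in N) d v j = Dl.
  rewrite (eq_bigr (fun=> 1)) => [|j]; first by rewrite sumr_const.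
  by rewrite inE => evj; rewrite dist_edge.
have dist_iN i : i \in N -> \sum_(j in N) d i j = 2 * Dl - 2.
  move=> iN; have evi : e v i by rewrite inE in iN.
  rewrite (bigD1 i) //= distxx add0r.
  rewrite (eq_bigr (fun=> 2)) => [|j /andP[]]; last first.
    rewrite inE => evj neq_ji.
    by rewrite (bipartite_dist_common_neighbour e_sym e_bip lt2n evi evj) // eq_sym.
  have : \sum_(j in N) (2 : R) = 2 + \sum_(j in N | j != i) 2 := bigD1 i iN.
  by rewrite sumr_const -[_ *+ deg e v]mulr_natr; lra.
rewrite big_setU1 //= big_setU1 //= distxx add0r dist_vN.
rewrite (eq_bigr (fun=> 2 * Dl - 1)) => [|i iN]; last first.
  have evi : e v i by rewrite inE in iN.
  by rewrite big_setU1 //= distC // dist_edge // dist_iN //; lra.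
by rewrite sumr_const -[_ *+ deg e v]mulr_natr; ring.
Qed.

Let S := \sum_j trans R e j.
Let Tv := trans R e v + Dl * tv R e v.

Lemma distmx_form_closed_nbhd_vec (al be : R) :
  let x := two_level_vec (closed_nbhd e v) al be in
  (x *m distmx R e *m x^T) 0 0
  = 2 * Dl ^+ 2 * al ^+ 2 + 2 * (Tv - 2 * Dl ^+ 2) * al * be
    + (S - 2 * Tv + 2 * Dl ^+ 2) * be ^+ 2.
Proof.
move=> x; rewrite /x two_level_form ?distmx_sym //.
have row_sumE i : \sum_j distmx R e i j = trans R e i.
  by rewrite transE; apply: eq_bigr => j _; rewrite mxE.
have -> : \sum_(i in closed_nbhd e v) \sum_(j in closed_nbhd e v) distmx R e i j
          = 2 * Dl ^+ 2.
  rewrite -sum_dist_closed_nbhd.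
  by apply: eq_bigr => i _; apply: eq_bigr => j _; rewrite mxE.
under eq_bigr do rewrite row_sumE.
under [X in _ * (al - be) * X]eq_bigr do rewrite row_sumE.
by rewrite sum_trans_closed_nbhd -/S -/Tv; ring.
Qed.

End ClosedNeighbourhood.

Section DistanceEigenvalueBounds.
Variables (R : realType) (n : nat) (e : rel 'I_n) (v : 'I_n).
Hypotheses (e_simple : simple_graph e) (e_bip : bipartite e) (lt2n : (2 < n)%N).
Hypothesis deg_lt : (deg e v + 1 < n)%N.

Local Notation Dl := ((deg e v)%:R : R).
Let S := \sum_(j < n) trans R e j.
Let a := (Dl + 1) * (S - 2 * trans R e v - 2 * tv R e v * Dl) + 2 * n%:R * Dl ^+ 2.
Let b := trans R e v ^+ 2 - 2 * S * Dl ^+ 2 + 2 * trans R e v * tv R e v * Dl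
         + tv R e v ^+ 2 * Dl ^+ 2.
Let u := 1 + Dl.
Let m := n%:R - Dl - 1.
Let P := 2 * Dl ^+ 2.
Let C := trans R e v + Dl * tv R e v - 2 * Dl ^+ 2.
Let E := S - 2 * (trans R e v + Dl * tv R e v) + 2 * Dl ^+ 2.

Let u_gt0 : 0 < u.
Proof. by have := ler0n R (deg e v); rewrite /u; lra. Qed.

Let m_gt0 : 0 < m.
Proof. by have := deg_lt; rewrite -(ltr_nat R) natrD /m; lra. Qed.

Let aE : a = P * m + E * u.
Proof. by rewrite /a /P /m /E /u; ring. Qed.

Let bE : b = C ^+ 2 - P * E.
Proof. by rewrite /b /C /P /E; ring. Qed.

Let form_closed_nbhd_vec al be :
  let x := two_level_vec (closed_nbhd e v) al be in
  [/\ (x *m distmx R e *m x^T) 0 0 = P * al ^+ 2 + 2 * C * al * be + E * be ^+ 2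
    & (x *m x^T) 0 0 = u * al ^+ 2 + m * be ^+ 2].
Proof.
have [e_sym e_irr] := e_simple.
by move=> x; rewrite /x distmx_form_closed_nbhd_vec // norm_closed_nbhd_vec.
Qed.

Lemma distmx_max_eig_ge rho : is_largest_eig (distmx R e) rho ->
  (a + Num.sqrt (a ^+ 2 + 4 * b * (1 + Dl) * (n%:R - Dl - 1)))
    / (2 * (1 + Dl) * (n%:R - Dl - 1)) <= rho.
Proof.
case=> _ le_rho; rewrite aE bE; apply: rayleigh2_max_root_le => // al be.
have [<- <-] := form_closed_nbhd_vec al be.
by apply: symmx_form_le_max_eig => //; apply: distmx_sym; case: e_simple.
Qed.

Lemma distmx_min_eig_le rho : is_least_eig (distmx R e) rho ->
  rho <= (a - Num.sqrt (a ^+ 2 + 4 * b * (1 + Dl) * (n%:R - Dl - 1)))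
           / (2 * (1 + Dl) * (n%:R - Dl - 1)).
Proof.
case=> _ ge_rho; rewrite aE bE; apply: rayleigh2_min_root_ge => // al be.
have [<- <-] := form_closed_nbhd_vec al be.
by apply: min_eig_le_symmx_form => //; apply: distmx_sym; case: e_simple.
Qed.

End DistanceEigenvalueBounds.

Theorem corollary3p3 (R : realType) (n : nat) (e : rel 'I_n) (k : nat)
  (hsimple : simple_graph e) (hconn : connected_graph e) (hbip : bipartite e)
  (hn : (3 <= n)%N) (hDelta : (maxdeg e <= n - 2)%N)
  (hk1 : (1 <= k)%N) (hk : (k <= n)%N)
  (hdegk : forall i : 'I_n, (i < k)%N -> deg e i = maxdeg e) :
  let Delta : R := (maxdeg e)%:R in
  let S : R := \sum_(j < n) trans R e j in
  let a := fun i : 'I_n =>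
    (Delta + 1) * (S - 2 * trans R e i - 2 * tv R e i * Delta)
    + 2 * n%:R * Delta ^+ 2 in
  let b := fun i : 'I_n =>
    trans R e i ^+ 2 - 2 * S * Delta ^+ 2 + 2 * trans R e i * tv R e i * Delta
    + tv R e i ^+ 2 * Delta ^+ 2 in
  let den : R := 2 * (1 + Delta) * (n%:R - Delta - 1) in
  (forall rho, is_largest_eig (distmx R e) rho ->
     forall i : 'I_n, (i < k)%N ->
       (a i + Num.sqrt (a i ^+ 2 + 4 * b i * (1 + Delta) * (n%:R - Delta - 1)))
         / den <= rho)
  /\
  (forall rho, is_least_eig (distmx R e) rho ->
     forall i : 'I_n, (i < k)%N ->
       rho <= (a i - Num.sqrt (a i ^+ 2 + 4 * b i * (1 + Delta) * (n%:R - Delta - 1)))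
         / den).
Proof.
move=> Delta S a b den.
have deg_lt (i : 'I_n) : (i < k)%N -> (deg e i + 1 < n)%N.
  by move=> /hdegk ->; lia.
split=> rho rho_eig i /[dup] /hdegk deg_i /deg_lt lt_deg;
  rewrite /a /b /den /Delta -deg_i.
- exact: distmx_max_eig_ge.
- exact: distmx_min_eig_le.
Qed.
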